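(* Let $\sigma^2>0$, $x_2>0$, $x\ge0$, and $a_1,a_2\in(0,1)$ with $a_1+a_2=1$, and define $\alpha,\beta,J(x)$ as in the context. Then (for every value $\beta>0$, in particular including $\beta\ge1$) $$J(x) = -\frac{x^2+\sigma^2}{x_2^2+\sigma^2} + \log\frac{a_2}{x_2^2+\sigma^2} + \log\bigl(1+\beta^{-1}\bigr) - \frac{\alpha\beta^{-1}}{\alpha+1}\, {}_2F_1\!\left(1, \tfrac{\alpha+1}{\alpha}; \tfrac{2\alpha+1}{\alpha}; -\beta^{-1}\right).$$
   Context: Logarithms are natural. Set $$\alpha = \frac{x_2^2}{x_2^2+\sigma^2}\cdot\frac{x^2+\sigma^2}{\sigma^2}, \qquad \beta = \frac{a_2}{a_1}\cdot\frac{\sigma^2}{x_2^2+\sigma^2},$$ both strictly positive, and $$J(x) = \int_0^\infty \frac{2y}{x^2+\sigma^2}\, e^{-y^2/(x^2+\sigma^2)} \log\!\left( \frac{a_1}{\sigma^2} e^{-y^2/\sigma^2} + \frac{a_2}{x_2^2+\sigma^2} e^{-y^2/(x_2^2+\sigma^2)} \right) dy.$$ ${}_2F_1(\xi_1,\xi_2;\eta_1;z)$ denotes the Gauss hypergeometric function: for $|z|<1$ it equals $\sum_{k\ge0}\frac{(\xi_1)_k(\xi_2)_k}{(\eta_1)_k}\frac{z^k}{k!}$ with $(a)_k=a(a+1)\cdots(a+k-1)$, and it is extended to $z\in\mathbb{C}\setminus(1,\infty)$ by analytic continuation. *)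

From Stdlib Require Import Reals ClassicalEpsilon.
From Coquelicot Require Import Coquelicot.
Open Scope R_scope.

Fixpoint poch (a : R) (k : nat) : R :=
  match k with
  | O => 1
  | S k' => poch a k' * (a + INR k')
  end.

Definition hyp2F1_coef (a b c : R) (k : nat) : R :=
  poch a k * poch b k / (poch c k * INR (Factorial.fact k)).

Definition real_analytic_on (D : R -> Prop) (F : R -> R) : Prop :=
  forall x0, D x0 ->
    exists r, 0 < r /\ exists cf : nat -> R,
      forall x, Rabs (x - x0) < r -> is_series (fun k => cf k * (x - x0) ^ k) (F x).

(* F is the analytic continuation of 2F1(a,b;c;.) along the real axis
   (-oo,1): real-analytic on (-oo,1) and equal to the series on (-1,1). *)
Definition is_hyp2F1_cont (a b c : R) (F : R -> R) : Prop :=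
  real_analytic_on (fun z => z < 1) F /\
  forall z, -1 < z < 1 -> is_series (fun k => hyp2F1_coef a b c k * z ^ k) (F z).

(* Gauss hypergeometric function for real z < 1 (the value of the
   analytic continuation; junk value for z >= 1 or if none exists). *)
Definition hyp2F1 (a b c z : R) : R :=
  epsilon (inhabits (fun _ : R => 0)) (is_hyp2F1_cont a b c) z.

Definition alpha (sigma2 x2 x : R) : R :=
  (x2 ^ 2 / (x2 ^ 2 + sigma2)) * ((x ^ 2 + sigma2) / sigma2).

Definition beta (sigma2 x2 a1 a2 : R) : R :=
  (a2 / a1) * (sigma2 / (x2 ^ 2 + sigma2)).

Definition J_integrand (sigma2 x2 a1 a2 x : R) (y : R) : R :=
  2 * y / (x ^ 2 + sigma2) * exp (- y ^ 2 / (x ^ 2 + sigma2)) *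
  ln (a1 / sigma2 * exp (- y ^ 2 / sigma2)
      + a2 / (x2 ^ 2 + sigma2) * exp (- y ^ 2 / (x2 ^ 2 + sigma2))).

(* After the substitution [u = y^2 / (x^2 + sigma2)] and the factorisation of the
   Gaussian mixture, J(x) becomes the integral over [u > 0] of
   [exp (-u) (L - kappa u + ln (1 + c exp (- alpha u)))] with [c = 1 / beta].  An
   integration by parts followed by [v = exp (- alpha u)] turns the logarithmic term
   into [ln (1 + c) - c * int_0^1 v^(1/alpha) / (1 + c v) dv]; here this is done by
   exhibiting an explicit primitive and letting [u] go to infinity.  The remaining
   integral is Euler's representation [(1 + p) int_0^1 v^p / (1 - z v) dv] of
   [2F1(1, 1 + p; 2 + p; z)] at [p = 1 / alpha], [z = - 1 / beta].  Expanding
   [1 / (1 - z v)] geometrically around any [z0 < 1] shows that this integral is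
   real-analytic on [(-oo, 1)]; at [z0 = 0] its coefficients are those of the
   hypergeometric series, so by the identity theorem it is the analytic
   continuation, for every [beta > 0]. *)

From Stdlib Require Import Reals Lra ClassicalEpsilon Classical.
From Coquelicot Require Import Coquelicot.
Open Scope R_scope.

Lemma ex_derive_continuous_R (f : R -> R) x : ex_derive f x -> continuous f x.
Proof. apply (ex_derive_continuous (K := R_AbsRing) (V := R_NormedModule)). Qed.

(** * Real powers *)

(* [v ^ p], extended by [0] to [v <= 0] so that it is continuous for [p > 0]. *)
Definition rpow (p v : R) : R := if Rlt_dec 0 v then Rpower v p else 0.

Lemma rpow_pos p v : 0 < v -> rpow p v = Rpower v p.
Proof. intros hv; unfold rpow; destruct (Rlt_dec 0 v); [reflexivity | lra]. Qed.

Lemma rpow_nonpos p v : v <= 0 -> rpow p v = 0.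
Proof. intros hv; unfold rpow; destruct (Rlt_dec 0 v); [lra | reflexivity]. Qed.

Lemma rpow_exp p y : rpow p (exp y) = exp (p * y).
Proof. rewrite rpow_pos by apply exp_pos. unfold Rpower. now rewrite ln_exp, Rmult_comm. Qed.

Lemma rpow_1 p : rpow p 1 = 1.
Proof. rewrite <- exp_0, rpow_exp, Rmult_0_r. reflexivity. Qed.

Lemma rpow_mul_pow p v k : rpow p v * v ^ k = rpow (p + INR k) v.
Proof.
  destruct (Rlt_dec 0 v) as [hv | hv].
  - rewrite !rpow_pos, Rpower_plus, Rpower_pow by lra. reflexivity.
  - rewrite !rpow_nonpos by lra. ring.
Qed.

Lemma rpow_bounds p v : 0 <= p -> v <= 1 -> 0 <= rpow p v <= 1.
Proof.
  intros hp hv. destruct (Rlt_dec 0 v) as [hv0 | hv0].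
  - rewrite rpow_pos by lra. split; [left; apply exp_pos |].
    rewrite <- (rpow_1 p), rpow_pos by lra. apply Rle_Rpower_l; lra.
  - rewrite rpow_nonpos by lra. lra.
Qed.

Lemma rpow_continuous p v : 0 < p -> continuous (rpow p) v.
Proof.
  intros hp. destruct (Rtotal_order v 0) as [hv | [-> | hv]].
  - apply continuous_ext_loc with (fun _ => 0); [| apply continuous_const].
    exists (mkposreal (- v) ltac:(lra)). intros y hy.
    change (Rabs (y - v) < - v) in hy. apply Rabs_def2 in hy.
    rewrite rpow_nonpos by lra. reflexivity.
  - apply continuity_pt_filterlim. intros eps heps.
    exists (Rpower eps (/ p)). split; [apply exp_pos |].
    intros y [_ hy]. simpl in *. unfold R_dist in *.
    rewrite Rminus_0_r in hy. rewrite (rpow_nonpos p 0), Rminus_0_r by lra.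
    destruct (Rlt_dec 0 y) as [hy0 | hy0].
    + rewrite rpow_pos, Rabs_pos_eq by (try left; try apply exp_pos; lra).
      rewrite Rabs_pos_eq in hy by lra.
      rewrite <- (Rpower_1 eps) by lra. replace 1 with (/ p * p) by (field; lra).
      rewrite <- Rpower_mult. apply Rlt_Rpower_l; lra.
    + rewrite rpow_nonpos, Rabs_R0 by lra. exact heps.
  - apply continuous_ext_loc with (fun y => exp (p * ln y)).
    + exists (mkposreal v hv). intros y hy.
      change (Rabs (y - v) < v) in hy. apply Rabs_def2 in hy.
      rewrite rpow_pos by lra. reflexivity.
    + apply ex_derive_continuous_R. auto_derive. exact hv.
Qed.

Lemma is_derive_mul_continuous (k : R -> R) x :
  continuous k x -> is_derive (fun y => (y - x) * k y) x (k x).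
Proof.
  intros hk. apply is_derive_Reals. intros eps heps.
  apply continuity_pt_filterlim in hk.
  destruct (hk eps heps) as [delta [hdelta hk']].
  exists (mkposreal delta hdelta). intros h hh0 hh. simpl in hh.
  replace ((x + h - x) * k (x + h) - (x - x) * k x) with (h * k (x + h)) by ring.
  replace (h * k (x + h) / h - k x) with (k (x + h) - k x) by (field; exact hh0).
  apply (hk' (x + h)). split.
  - split; [exact I | lra].
  - simpl; unfold R_dist. now replace (x + h - x) with h by ring.
Qed.

Lemma is_derive_rpow r v : 0 < r -> is_derive (rpow (r + 1)) v ((r + 1) * rpow r v).
Proof.
  intros hr. destruct (Rtotal_order v 0) as [hv | [-> | hv]].
  - rewrite rpow_nonpos, Rmult_0_r by lra.
    apply is_derive_ext_loc with (fun _ => 0); [| auto_derive; reflexivity].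
    exists (mkposreal (- v) ltac:(lra)). intros y hy.
    change (Rabs (y - v) < - v) in hy. apply Rabs_def2 in hy.
    rewrite rpow_nonpos by lra. reflexivity.
  - rewrite (rpow_nonpos r 0), Rmult_0_r by lra.
    rewrite <- (rpow_nonpos r 0) at 2 by lra.
    apply is_derive_ext with (fun y => (y - 0) * rpow r y).
    + intros y. rewrite Rminus_0_r, <- (pow_1 y) at 1.
      rewrite Rmult_comm, rpow_mul_pow. reflexivity.
    + apply is_derive_mul_continuous, rpow_continuous, hr.
  - apply is_derive_ext_loc with (fun y => exp ((r + 1) * ln y)).
    + exists (mkposreal v hv). intros y hy.
      change (Rabs (y - v) < v) in hy. apply Rabs_def2 in hy.
      rewrite rpow_pos by lra. reflexivity.
    + rewrite rpow_pos by lra. auto_derive; [exact hv |].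
      unfold Rpower. replace ((r + 1) * ln v) with (ln v + r * ln v) by ring.
      rewrite exp_plus, exp_ln by exact hv. field. lra.
Qed.

Lemma RInt_rpow_0_1 r : 0 < r -> RInt (rpow r) 0 1 = / (r + 1).
Proof.
  intros hr. apply is_RInt_unique.
  replace (/ (r + 1)) with (minus (/ (r + 1) * rpow (r + 1) 1) (/ (r + 1) * rpow (r + 1) 0)).
  - apply (is_RInt_derive (fun v => / (r + 1) * rpow (r + 1) v)).
    + intros v _. replace (rpow r v) with (/ (r + 1) * ((r + 1) * rpow r v)) by (field; lra).
      apply is_derive_scal, is_derive_rpow, hr.
    + intros v _. apply rpow_continuous, hr.
  - rewrite rpow_1, rpow_nonpos by lra. unfold minus, plus, opp; simpl. ring.
Qed.

(** * Euler's integral for 2F1(1, 1 + p; 2 + p; z) *)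

Lemma is_series_of_geometric_bound (a : nat -> R) l C rho :
  0 <= rho < 1 -> (forall N, Rabs (l - sum_n a N) <= C * rho ^ N) -> is_series a l.
Proof.
  intros hrho hbound.
  assert (hgeom : is_lim_seq (fun N => C * rho ^ N) 0).
  { replace (Finite 0) with (Rbar_mult C 0) by (simpl; f_equal; ring).
    apply is_lim_seq_scal_l, is_lim_seq_geom. rewrite Rabs_pos_eq; lra. }
  change (is_lim_seq (sum_n a) l).
  apply (is_lim_seq_le_le (fun N => l - C * rho ^ N) _ (fun N => l + C * rho ^ N)).
  - intros N. specialize (hbound N). apply Rabs_le_between in hbound. lra.
  - replace (Finite l) with (Finite (l - 0)) by (f_equal; ring).
    apply is_lim_seq_minus'; [apply is_lim_seq_const | exact hgeom].
  - replace (Finite l) with (Finite (l + 0)) by (f_equal; ring).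
    apply is_lim_seq_plus'; [apply is_lim_seq_const | exact hgeom].
Qed.

Lemma is_RInt_sum_n (f : nat -> R -> R) (I : nat -> R) a b N :
  (forall k, is_RInt (f k) a b (I k)) ->
  is_RInt (fun x => sum_n (fun k => f k x) N) a b (sum_n I N).
Proof.
  intros hf. induction N as [| N IH].
  - rewrite sum_O. apply (is_RInt_ext (f 0%nat)); [| apply hf].
    intros x _. now rewrite sum_O.
  - rewrite sum_Sn. apply (is_RInt_ext (fun x => plus (sum_n (fun k => f k x) N) (f (S N) x))).
    + intros x _. now rewrite sum_Sn.
    + apply (is_RInt_plus (V := R_NormedModule)); [exact IH | apply hf].
Qed.

Lemma geometric_sum_remainder (d v w : R) N : w <> 0 -> w - d * v <> 0 ->
  / (w - d * v) - sum_n (fun k => d ^ k * (v ^ k / w ^ S k)) N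
  = (d * v / w) ^ S N / (w - d * v).
Proof.
  intros hw hwd.
  assert (hq : d * v / w <> 1).
  { intros e. apply hwd. rewrite <- (Rmult_1_r w) at 1. rewrite <- e. field. exact hw. }
  rewrite sum_n_Reals.
  rewrite (sum_eq _ (fun k => (d * v / w) ^ k * / w)).
  - rewrite <- scal_sum, tech3 by exact hq. field. split; assumption.
  - intros k _. unfold Rdiv. rewrite !Rpow_mult_distr, pow_inv. simpl. field.
    auto using pow_nonzero.
Qed.

Lemma continuous_rpow_div p (g : R -> R) v :
  0 < p -> continuous g v -> g v <> 0 -> continuous (fun y => rpow p y / g y) v.
Proof.
  intros hp hg hg0.
  apply (continuous_mult (K := R_AbsRing)); [apply rpow_continuous, hp |].
  apply continuous_Rinv_comp; assumption.
Qed.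

Definition euler_integrand (p z v : R) : R := rpow p v / (1 - z * v).

Lemma continuous_euler_integrand p z v :
  0 < p -> 0 < 1 - z * v -> continuous (euler_integrand p z) v.
Proof.
  intros hp hv. apply continuous_rpow_div; [exact hp | | lra].
  apply ex_derive_continuous_R. auto_derive. exact I.
Qed.

Definition hyp2F1_euler (p z : R) : R := (1 + p) * RInt (euler_integrand p z) 0 1.

(* [euler_radius z0] is the minimum of [1 - z0 * v] over [0 <= v <= 1]; the
   coefficients come from [1 / (1 - z v) = sum_k (z - z0)^k v^k / (1 - z0 v)^(k+1)]. *)
Definition euler_radius (z0 : R) : R := Rmin 1 (1 - z0).

Definition euler_coef (p z0 : R) (k : nat) : R :=
  (1 + p) * RInt (fun v => rpow (p + INR k) v / (1 - z0 * v) ^ S k) 0 1.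

Lemma euler_radius_pos z0 : z0 < 1 -> 0 < euler_radius z0.
Proof. intros h; unfold euler_radius; apply Rmin_pos; lra. Qed.

Lemma euler_radius_le z0 v : z0 < 1 -> 0 <= v <= 1 -> euler_radius z0 <= 1 - z0 * v.
Proof.
  intros h hv. unfold euler_radius. destruct (Rle_dec z0 0).
  - eapply Rle_trans; [apply Rmin_l | nra].
  - eapply Rle_trans; [apply Rmin_r | nra].
Qed.

Section EulerTaylor.

Variables (p z0 z : R).
Hypotheses (hp : 0 < p) (hz0 : z0 < 1) (hz : Rabs (z - z0) < euler_radius z0).

Lemma euler_denominators_ge v : 0 <= v <= 1 ->
  euler_radius z0 <= 1 - z0 * v /\ euler_radius z0 - Rabs (z - z0) <= 1 - z * v.
Proof.
  intros hv. pose proof (euler_radius_le z0 v hz0 hv) as hw. split; [exact hw |].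
  replace (1 - z * v) with (1 - z0 * v - (z - z0) * v) by ring.
  pose proof (Rle_abs (z - z0)). pose proof (Rabs_pos (z - z0)).
  assert ((z - z0) * v <= Rabs (z - z0)) by nra.
  lra.
Qed.

Lemma euler_ratio_bounds : 0 <= Rabs (z - z0) / euler_radius z0 < 1.
Proof.
  pose proof (euler_radius_pos z0 hz0). split.
  - apply Rdiv_le_0_compat; [apply Rabs_pos | exact H].
  - apply (Rmult_lt_reg_r (euler_radius z0)); [exact H |]. unfold Rdiv.
    rewrite Rmult_assoc, Rinv_l, Rmult_1_r, Rmult_1_l by lra. exact hz.
Qed.

Lemma euler_remainder_le N v : 0 <= v <= 1 ->
  Rabs (rpow p v * ((z - z0) * v / (1 - z0 * v)) ^ S N / (1 - z * v))
  <= (Rabs (z - z0) / euler_radius z0) ^ S N / (euler_radius z0 - Rabs (z - z0)).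
Proof.
  intros hv. destruct (euler_denominators_ge v hv) as [hw hu].
  pose proof (euler_radius_pos z0 hz0). pose proof (rpow_bounds p v ltac:(lra) ltac:(lra)).
  assert (hratio : Rabs ((z - z0) * v / (1 - z0 * v)) <= Rabs (z - z0) / euler_radius z0).
  { unfold Rdiv. rewrite !Rabs_mult, Rabs_inv, (Rabs_pos_eq v), (Rabs_pos_eq (1 - z0 * v)) by lra.
    pose proof (Rabs_pos (z - z0)).
    apply Rmult_le_compat; try nra.
    - left; apply Rinv_0_lt_compat; lra.
    - apply Rinv_le_contravar; lra. }
  unfold Rdiv at 1 2.
  rewrite !Rabs_mult, Rabs_inv, <- RPow_abs, (Rabs_pos_eq (rpow p v)), (Rabs_pos_eq (1 - z * v))
    by lra.
  rewrite <- (Rmult_1_l (_ ^ S N / _)). unfold Rdiv. rewrite Rmult_assoc.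
  apply Rmult_le_compat; try lra.
  - apply Rmult_le_pos; [apply pow_le, Rabs_pos |]. left; apply Rinv_0_lt_compat; lra.
  - apply Rmult_le_compat; [apply pow_le, Rabs_pos | left; apply Rinv_0_lt_compat; lra | |].
    + apply pow_incr. split; [apply Rabs_pos | exact hratio].
    + apply Rinv_le_contravar; lra.
Qed.

Lemma euler_remainder_eq N v : 0 <= v <= 1 ->
  euler_integrand p z v
  - sum_n (fun k => (z - z0) ^ k * (rpow (p + INR k) v / (1 - z0 * v) ^ S k)) N
  = rpow p v * ((z - z0) * v / (1 - z0 * v)) ^ S N / (1 - z * v).
Proof.
  intros hv. destruct (euler_denominators_ge v hv) as [hw hu].
  pose proof (euler_radius_pos z0 hz0).
  assert (hu' : 1 - z0 * v - (z - z0) * v <> 0) by lra.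
  rewrite (sum_n_ext _ (fun k => rpow p v * ((z - z0) ^ k * (v ^ k / (1 - z0 * v) ^ S k)))).
  - rewrite (sum_n_mult_l (K := R_Ring)). unfold euler_integrand. change mult with Rmult.
    replace (1 - z * v) with (1 - z0 * v - (z - z0) * v) by ring.
    transitivity (rpow p v * (((z - z0) * v / (1 - z0 * v)) ^ S N / (1 - z0 * v - (z - z0) * v)));
      [| unfold Rdiv; ring].
    rewrite <- geometric_sum_remainder by lra.
    unfold Rdiv. rewrite Rmult_minus_distr_l. reflexivity.
  - intros k. simpl. rewrite <- rpow_mul_pow. unfold Rdiv. ring.
Qed.

Lemma ex_RInt_euler_coef_integrand k :
  ex_RInt (fun v => rpow (p + INR k) v / (1 - z0 * v) ^ S k) 0 1.
Proof.
  apply (ex_RInt_continuous (V := R_CompleteNormedModule)).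
  intros v hv. rewrite Rmin_left, Rmax_right in hv by lra.
  destruct (euler_denominators_ge v hv) as [hw _]. pose proof (euler_radius_pos z0 hz0).
  apply continuous_rpow_div; [pose proof (pos_INR k); lra | |].
  - apply ex_derive_continuous_R. auto_derive. exact I.
  - apply pow_nonzero. lra.
Qed.

Lemma ex_RInt_euler_integrand : ex_RInt (euler_integrand p z) 0 1.
Proof.
  apply (ex_RInt_continuous (V := R_CompleteNormedModule)).
  intros v hv. rewrite Rmin_left, Rmax_right in hv by lra.
  destruct (euler_denominators_ge v hv) as [_ hu]. pose proof (euler_radius_pos z0 hz0).
  apply continuous_euler_integrand; [exact hp | lra].
Qed.

Lemma hyp2F1_euler_taylor_error N :
  Rabs (hyp2F1_euler p z - sum_n (fun k => euler_coef p z0 k * (z - z0) ^ k) N)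
  <= (1 + p) * ((Rabs (z - z0) / euler_radius z0) ^ S N / (euler_radius z0 - Rabs (z - z0))).
Proof.
  set (T k v := rpow (p + INR k) v / (1 - z0 * v) ^ S k).
  assert (hpartial : sum_n (fun k => euler_coef p z0 k * (z - z0) ^ k) N
                     = (1 + p) * sum_n (fun k => (z - z0) ^ k * RInt (T k) 0 1) N).
  { rewrite <- (sum_n_mult_l (K := R_Ring)). apply sum_n_ext. intros k.
    unfold euler_coef, T. change mult with Rmult. cbv beta.
    rewrite (Rmult_comm ((z - z0) ^ k)). apply Rmult_assoc. }
  assert (hrem : is_RInt
    (fun v => euler_integrand p z v - sum_n (fun k => (z - z0) ^ k * T k v) N) 0 1
    (RInt (euler_integrand p z) 0 1 - sum_n (fun k => (z - z0) ^ k * RInt (T k) 0 1) N)).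
  { apply (is_RInt_minus (V := R_NormedModule)).
    - apply (RInt_correct (V := R_CompleteNormedModule)), ex_RInt_euler_integrand.
    - apply is_RInt_sum_n. intros k.
      apply (is_RInt_scal (V := R_NormedModule)), (RInt_correct (V := R_CompleteNormedModule)).
      apply ex_RInt_euler_coef_integrand. }
  rewrite hpartial. unfold hyp2F1_euler.
  rewrite <- Rmult_minus_distr_l, Rabs_mult, Rabs_pos_eq by lra.
  rewrite <- (is_RInt_unique _ _ _ _ hrem).
  apply Rmult_le_compat_l; [lra |].
  set (M := (Rabs (z - z0) / euler_radius z0) ^ S N / (euler_radius z0 - Rabs (z - z0))).
  eapply Rle_trans;
    [apply (abs_RInt_le_const _ 0 1 M); [lra | eexists; exact hrem |] | right; ring].
  intros v hv. unfold T. rewrite euler_remainder_eq by exact hv. apply euler_remainder_le, hv.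
Qed.

Lemma hyp2F1_euler_taylor :
  is_series (fun k => euler_coef p z0 k * (z - z0) ^ k) (hyp2F1_euler p z).
Proof.
  pose proof (euler_radius_pos z0 hz0).
  apply (is_series_of_geometric_bound _ _
    ((1 + p) / (euler_radius z0 - Rabs (z - z0)) * (Rabs (z - z0) / euler_radius z0))
    (Rabs (z - z0) / euler_radius z0) euler_ratio_bounds).
  intros N. eapply Rle_trans; [apply hyp2F1_euler_taylor_error |].
  right. simpl. field. lra.
Qed.

End EulerTaylor.

Lemma hyp2F1_euler_analytic p : 0 < p -> real_analytic_on (fun z => z < 1) (hyp2F1_euler p).
Proof.
  intros hp z0 hz0. exists (euler_radius z0). split; [apply euler_radius_pos, hz0 |].
  exists (euler_coef p z0). intros z hz. apply hyp2F1_euler_taylor; assumption.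
Qed.

Lemma poch_1 k : poch 1 k = INR (Factorial.fact k).
Proof.
  induction k as [| k IH]; [reflexivity |].
  simpl poch. rewrite IH. change (Factorial.fact (S k)) with (S k * Factorial.fact k)%nat.
  rewrite mult_INR, S_INR. ring.
Qed.

Lemma poch_pos b k : 0 < b -> 0 < poch b k.
Proof.
  intros hb. induction k as [| k IH]; simpl; [lra |].
  apply Rmult_lt_0_compat; [exact IH | pose proof (pos_INR k); lra].
Qed.

Lemma poch_succ_shift b k : poch b k * (b + INR k) = b * poch (b + 1) k.
Proof.
  induction k as [| k IH]; [simpl; ring | cbn [poch]].
  rewrite S_INR. replace (b + 1 + INR k) with (b + (INR k + 1)) by ring.
  rewrite <- Rmult_assoc, IH. ring.
Qed.

Lemma hyp2F1_coef_1_succ b k : 0 < b -> hyp2F1_coef 1 b (b + 1) k = b / (b + INR k).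
Proof.
  intros hb. unfold hyp2F1_coef. rewrite poch_1.
  pose proof (poch_pos (b + 1) k ltac:(lra)). pose proof (pos_INR k).
  pose proof (INR_fact_lt_0 k).
  replace (poch b k) with (b * poch (b + 1) k / (b + INR k))
    by (rewrite <- poch_succ_shift; field; lra).
  field. repeat split; lra.
Qed.

Lemma euler_coef_0 p k : 0 < p -> euler_coef p 0 k = (1 + p) / (1 + p + INR k).
Proof.
  intros hp. pose proof (pos_INR k). unfold euler_coef.
  rewrite (RInt_ext _ (rpow (p + INR k))).
  - rewrite RInt_rpow_0_1 by lra. field. lra.
  - intros v _. rewrite Rmult_0_l, Rminus_0_r, pow1. apply Rdiv_1_r.
Qed.

Lemma is_hyp2F1_cont_euler p : 0 < p -> is_hyp2F1_cont 1 (1 + p) (2 + p) (hyp2F1_euler p).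
Proof.
  intros hp. split; [apply hyp2F1_euler_analytic, hp |].
  intros z hz.
  assert (hr : euler_radius 0 = 1) by (unfold euler_radius; rewrite Rminus_0_r, Rmin_left; lra).
  assert (hz' : Rabs (z - 0) < euler_radius 0) by (rewrite hr, Rminus_0_r; apply Rabs_def1; lra).
  eapply is_series_ext; [| exact (hyp2F1_euler_taylor p 0 z hp ltac:(lra) hz')].
  intros k. rewrite Rminus_0_r, euler_coef_0 by exact hp.
  replace (2 + p) with (1 + p + 1) by ring.
  rewrite hyp2F1_coef_1_succ by lra. reflexivity.
Qed.

(** * Uniqueness of the analytic continuation *)

Lemma continuous_zero_right (f : R -> R) x r : continuous f x -> 0 < r ->
  (forall y, x < y < x + r -> f y = 0) -> f x = 0.
Proof.
  intros hf hr hzero.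
  apply (filterlim_locally_unique (F := at_right x) f).
  - eapply filterlim_filter_le_1; [apply filter_le_within | exact hf].
  - apply (filterlim_ext_loc (fun _ => 0)); [| apply filterlim_const].
    exists (mkposreal r hr). intros y hy hxy.
    change (Rabs (y - x) < r) in hy. apply Rabs_def2 in hy.
    symmetry. apply hzero. lra.
Qed.

Lemma CV_radius_pos_of_is_series (a : nat -> R) h l :
  0 < h -> is_series (fun k => a k * h ^ k) l -> Rbar_lt 0 (CV_radius a).
Proof.
  intros hh hs.
  assert (hlim : is_lim_seq (fun k => Rabs (a k * h ^ k)) 0).
  { apply (is_lim_seq_abs_0 (fun k => a k * h ^ k)). apply ex_series_lim_0. exists l. exact hs. }
  apply is_lim_seq_Reals in hlim.
  destruct (cauchy_bound _ (CV_Cauchy _ (exist _ 0 hlim))) as [M HM].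
  apply Rbar_lt_le_trans with (Finite h); [exact hh |].
  apply CV_radius_bounded. exists M. intros n. apply HM. exists n. reflexivity.
Qed.

Lemma PSeries_coef_eq_0 (a : nat -> R) r n : 0 < r -> Rbar_lt 0 (CV_radius a) ->
  (forall h, 0 < h < r -> PSeries a h = 0) -> a n = 0.
Proof.
  revert a. induction n as [| n IH]; intros a hr hrad hzero.
  all: assert (ha0 : a 0%nat = 0)
         by (rewrite <- PSeries_0; apply (continuous_zero_right _ 0 r);
             [apply continuity_pt_filterlim, PSeries_continuity; rewrite Rabs_R0; exact hrad
             | exact hr | intros y hy; apply hzero; lra]).
  - exact ha0.
  - change (a (S n)) with (PS_decr_1 a n). apply (IH _ hr).
    + rewrite CV_radius_decr_1. exact hrad.
    + intros h hh. specialize (hzero h hh).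
      rewrite (PSeries_decr_1_aux a h ha0) in hzero.
      apply Rmult_integral in hzero. destruct hzero; [lra | assumption].
Qed.

Lemma power_series_zero_right (F : R -> R) (cf : nat -> R) x0 r : 0 < r ->
  (forall y, Rabs (y - x0) < r -> is_series (fun k => cf k * (y - x0) ^ k) (F y)) ->
  (forall y, x0 < y < x0 + r -> F y = 0) ->
  forall y, Rabs (y - x0) < r -> F y = 0.
Proof.
  intros hr hF hzero.
  assert (hshift : forall h, Rabs h < r -> is_series (fun k => cf k * h ^ k) (F (x0 + h))).
  { intros h hh. pose proof (hF (x0 + h) ltac:(now replace (x0 + h - x0) with h by ring)) as H.
    now replace (x0 + h - x0) with h in H by ring. }
  assert (hrad : Rbar_lt 0 (CV_radius cf)).
  { apply (CV_radius_pos_of_is_series cf (r / 2) (F (x0 + r / 2))); [lra |].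
    apply hshift. rewrite Rabs_pos_eq; lra. }
  assert (hcf : forall n, cf n = 0).
  { intros n. apply (PSeries_coef_eq_0 cf r n hr hrad). intros h hh.
    unfold PSeries. rewrite (is_series_unique _ _ (hshift h ltac:(rewrite Rabs_pos_eq; lra))).
    apply hzero. lra. }
  intros y hy. rewrite <- (is_series_unique _ _ (hF y hy)), <- (PSeries_const_0 (y - x0)).
  apply Series_ext. intros k. rewrite hcf. ring.
Qed.

Lemma real_analytic_on_minus D (F1 F2 : R -> R) :
  real_analytic_on D F1 -> real_analytic_on D F2 ->
  real_analytic_on D (fun x => F1 x - F2 x).
Proof.
  intros h1 h2 x0 hx0.
  destruct (h1 x0 hx0) as [r1 [hr1 [c1 H1]]], (h2 x0 hx0) as [r2 [hr2 [c2 H2]]].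
  exists (Rmin r1 r2). split; [apply Rmin_pos; assumption |].
  exists (fun k => c1 k - c2 k). intros x hx.
  pose proof (Rmin_l r1 r2). pose proof (Rmin_r r1 r2).
  eapply is_series_ext; [| exact (is_series_minus _ _ _ _ (H1 x ltac:(lra)) (H2 x ltac:(lra)))].
  intros k. simpl. unfold plus, opp; simpl. ring.
Qed.

(* The infimum [T] of the left ends of intervals [(t, b)] on which [F] vanishes
   must be [-oo]: at a finite [T] the expansion of [F] would vanish on a whole
   ball around [T]. *)
Lemma real_analytic_zero_continuation (F : R -> R) a b : a < b ->
  real_analytic_on (fun z => z < b) F -> (forall y, a < y < b -> F y = 0) ->
  forall z, z < b -> F z = 0.
Proof.
  intros hab hF hzero.
  set (A t := t < b /\ forall y, t < y < b -> F y = 0).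
  assert (hA : A a) by (split; assumption).
  destruct (Glb_Rbar_correct A) as [hlb hglb].
  assert (below : forall y : R, Rbar_lt (Glb_Rbar A) y -> exists t, A t /\ t < y).
  { intros y hy. apply NNPP. intros hno.
    assert (Rbar_le y (Glb_Rbar A)).
    { apply hglb. intros t ht. simpl. apply Rnot_lt_le. intros hty. apply hno. exists t. auto. }
    apply (Rbar_lt_not_le _ _ hy). assumption. }
  destruct (Glb_Rbar A) as [T | |].
  - exfalso.
    assert (hTa : T <= a) by exact (hlb a hA).
    assert (hzT : forall y, T < y < b -> F y = 0).
    { intros y hy. destruct (below y (proj1 hy)) as [t [[_ ht] hty]]. apply ht. lra. }
    destruct (hF T ltac:(lra)) as [r [hr [cf hcf]]].
    set (r' := Rmin r (b - T)).
    assert (hr' : 0 < r') by (apply Rmin_pos; lra).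
    assert (r' <= r) by apply Rmin_l. assert (r' <= b - T) by apply Rmin_r.
    assert (hball : forall y, Rabs (y - T) < r' -> F y = 0).
    { apply (power_series_zero_right F cf T r' hr').
      - intros y hy. apply hcf. lra.
      - intros y hy. apply hzT. lra. }
    assert (A (T - r' / 2)).
    { split; [lra |]. intros y hy. destruct (Rlt_le_dec y (T + r')) as [hy' | hy'].
      - apply hball. apply Rabs_def1; lra.
      - apply hzT. lra. }
    assert (T <= T - r' / 2) by now apply hlb. lra.
  - exfalso. exact (hlb a hA).
  - intros z hz. destruct (below z I) as [t [[_ ht] htz]]. apply ht. lra.
Qed.

Lemma is_hyp2F1_cont_unique a b c F1 F2 :
  is_hyp2F1_cont a b c F1 -> is_hyp2F1_cont a b c F2 -> forall z, z < 1 -> F1 z = F2 z.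
Proof.
  intros [h1 s1] [h2 s2] z hz.
  apply Rminus_diag_uniq.
  apply (real_analytic_zero_continuation (fun x => F1 x - F2 x) (-1) 1);
    [lra | apply real_analytic_on_minus; assumption | | exact hz].
  intros y hy. rewrite <- (is_series_unique _ _ (s1 y hy)), <- (is_series_unique _ _ (s2 y hy)).
  apply Rminus_diag_eq. reflexivity.
Qed.

Lemma hyp2F1_eq_of_is_hyp2F1_cont a b c F :
  is_hyp2F1_cont a b c F -> forall z, z < 1 -> hyp2F1 a b c z = F z.
Proof.
  intros hF. apply (is_hyp2F1_cont_unique a b c); [| exact hF].
  unfold hyp2F1. apply epsilon_spec. exists F. exact hF.
Qed.

(** * The integral J *)

Lemma is_RInt_gen_p_infty_of_derive (f F : R -> R) (a l : R) :
  (forall y, is_derive F y (f y)) -> (forall y, continuous f y) -> is_lim F p_infty l ->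
  is_RInt_gen f (at_point a) (Rbar_locally p_infty) (l - F a).
Proof.
  intros hF hf hl.
  apply (is_RInt_gen_ext (Derive F)).
  - apply filter_forall. intros ab y _. apply is_derive_unique, hF.
  - apply is_RInt_gen_Derive.
    + apply filter_forall. intros ab y _. eexists. apply hF.
    + apply filter_forall. intros ab y _.
      eapply continuous_ext; [intros z; symmetry; apply is_derive_unique, hF | apply hf].
    + intros P hP. exact (locally_singleton _ _ hP).
    + exact hl.
Qed.

Lemma is_lim_mult' (f g : R -> R) x (lf lg : R) :
  is_lim f x lf -> is_lim g x lg -> is_lim (fun y => f y * g y) x (lf * lg).
Proof. intros hf hg. apply (is_lim_mult f g x lf lg hf hg). exact I. Qed.

Lemma is_lim_exp_neg_mul lam : 0 < lam -> is_lim (fun u => exp (- lam * u)) p_infty 0.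
Proof.
  intros hl.
  apply (is_lim_ext (fun u => exp (- lam * u + 0))); [intros u; now rewrite Rplus_0_r |].
  apply is_lim_comp_lin; [| lra].
  replace (Rbar_plus (Rbar_mult (- lam) p_infty) 0) with m_infty; [apply is_lim_exp_m |].
  unfold Rbar_mult, Rbar_mult'. simpl. case Rle_dec; intros; [exfalso; lra | reflexivity].
Qed.

Lemma is_lim_mul_exp_neg : is_lim (fun u => u * exp (- u)) p_infty 0.
Proof.
  apply (is_lim_ext (fun u => - ((-1 * u + 0) * exp (-1 * u + 0)))).
  { intros u. replace (-1 * u + 0) with (- u) by ring. ring. }
  replace (Finite 0) with (Rbar_opp 0) by (simpl; f_equal; ring).
  apply is_lim_opp, (is_lim_comp_lin (fun y => y * exp y)); [| lra].
  replace (Rbar_plus (Rbar_mult (-1) p_infty) 0) with m_infty; [apply is_lim_mul_exp_m |].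
  unfold Rbar_mult, Rbar_mult'. simpl. case Rle_dec; intros; [exfalso; lra | reflexivity].
Qed.

Lemma is_lim_sqr_div s : 0 < s -> is_lim (fun y => y ^ 2 / s) p_infty p_infty.
Proof.
  intros hs. apply is_lim_spec. intros M. exists (Rmax 1 (s * M)). intros y hy.
  pose proof (Rmax_l 1 (s * M)). pose proof (Rmax_r 1 (s * M)).
  apply (Rmult_lt_reg_r s); [exact hs |].
  replace (y ^ 2 / s * s) with (y * y) by (field; lra). nra.
Qed.

Section LogExpIntegral.

Variables (L kappa c al : R).
Hypotheses (hc : 0 < c) (hal : 0 < al).

Definition log_exp_integrand (u : R) : R :=
  exp (- u) * (L - kappa * u + ln (1 + c * exp (- al * u))).

Definition euler_tail (a : R) : R := RInt (euler_integrand (/ al) (- c)) a 1.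

Definition log_exp_primitive (u : R) : R :=
  L * (1 - exp (- u)) - kappa * (1 - exp (- u) - u * exp (- u))
  - exp (- u) * ln (1 + c * exp (- al * u)) + ln (1 + c) - c * euler_tail (exp (- al * u)).

Lemma is_derive_euler_tail a :
  0 < 1 + c * a -> is_derive euler_tail a (- euler_integrand (/ al) (- c) a).
Proof.
  intros ha. apply (is_derive_RInt' (V := R_NormedModule) _ _ a 1).
  - exists (mkposreal ((1 + c * a) / c) ltac:(apply Rdiv_lt_0_compat; lra)).
    intros a0 ha0. change (Rabs (a0 - a) < (1 + c * a) / c) in ha0. apply Rabs_def2 in ha0.
    assert (ha0' : 0 < 1 + c * a0).
    { destruct ha0 as [_ h]. apply (Rmult_lt_compat_l c) in h; [| lra].
      replace (c * - ((1 + c * a) / c)) with (- (1 + c * a)) in h by (field; lra). lra. }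
    apply (RInt_correct (V := R_CompleteNormedModule)), ex_RInt_continuous.
    intros v hv. apply continuous_euler_integrand; [apply Rinv_0_lt_compat, hal |].
    destruct (Rle_dec a0 1); [rewrite Rmin_left in hv | rewrite Rmin_right in hv]; nra.
  - apply continuous_euler_integrand; [apply Rinv_0_lt_compat, hal | lra].
Qed.

Lemma is_derive_log_exp_primitive u : is_derive log_exp_primitive u (log_exp_integrand u).
Proof.
  assert (hE : 0 < exp (- al * u)) by apply exp_pos.
  assert (htail : Derive euler_tail (exp (- al * u))
                  = - euler_integrand (/ al) (- c) (exp (- al * u)))
    by (apply is_derive_unique, is_derive_euler_tail; nra).
  unfold log_exp_primitive. auto_derive.
  - repeat split; [nra |]. eexists. apply is_derive_euler_tail. nra.
  - change (Derive (fun x => euler_tail x)) with (Derive euler_tail). rewrite htail.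
    unfold euler_integrand, log_exp_integrand. rewrite rpow_exp.
    replace (/ al * (- al * u)) with (- u) by (field; lra).
    field. nra.
Qed.

Lemma log_exp_primitive_0 : log_exp_primitive 0 = 0.
Proof.
  unfold log_exp_primitive, euler_tail.
  rewrite Rmult_0_r, Ropp_0, exp_0, RInt_point, !Rmult_1_r. unfold zero; simpl. lra.
Qed.

Lemma continuous_log_exp_integrand u : continuous log_exp_integrand u.
Proof.
  apply ex_derive_continuous_R. unfold log_exp_integrand. auto_derive.
  pose proof (exp_pos (- al * u)). nra.
Qed.

Lemma is_lim_log_exp_primitive :
  is_lim log_exp_primitive p_infty (L - kappa + ln (1 + c) - c * euler_tail 0).
Proof.
  pose proof (is_lim_exp_neg_mul 1 ltac:(lra)) as hE1.
  pose proof (is_lim_exp_neg_mul al hal) as hE.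
  assert (hE1' : is_lim (fun u => exp (- u)) p_infty 0).
  { apply (is_lim_ext (fun u => exp (- (1) * u))); [intros u; f_equal; ring | exact hE1]. }
  assert (hln : is_lim (fun u => ln (1 + c * exp (- al * u))) p_infty (ln (1 + c * 0))).
  { apply (is_lim_comp_continuous _ (fun x => ln (1 + c * x))); [exact hE |].
    apply ex_derive_continuous_R. auto_derive. lra. }
  assert (htail : is_lim (fun u => euler_tail (exp (- al * u))) p_infty (euler_tail 0)).
  { apply (is_lim_comp_continuous _ euler_tail); [exact hE |].
    apply ex_derive_continuous_R. eexists. apply is_derive_euler_tail. lra. }
  assert (hlim : is_lim log_exp_primitive p_infty
    (L * (1 - 0) - kappa * (1 - 0 - 0) - 0 * ln (1 + c * 0) + ln (1 + c) - c * euler_tail 0)).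
  { unfold log_exp_primitive.
    apply is_lim_minus'; [apply is_lim_plus' | apply is_lim_mult'; [apply is_lim_const | exact htail]].
    apply is_lim_minus'; [apply is_lim_minus' | apply is_lim_mult'; assumption].
    - apply is_lim_mult'; [apply is_lim_const |].
      apply is_lim_minus'; [apply is_lim_const | exact hE1'].
    - apply is_lim_mult'; [apply is_lim_const |].
      apply is_lim_minus'; [| apply is_lim_mul_exp_neg].
      apply is_lim_minus'; [apply is_lim_const | exact hE1'].
    - apply is_lim_const. }
  replace (L - kappa + ln (1 + c) - c * euler_tail 0) with
    (L * (1 - 0) - kappa * (1 - 0 - 0) - 0 * ln (1 + c * 0) + ln (1 + c) - c * euler_tail 0)
    by (rewrite Rmult_0_r, Rplus_0_r, ln_1; ring).
  exact hlim.
Qed.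

Lemma is_RInt_gen_gauss_log_exp s : 0 < s ->
  is_RInt_gen (fun y => 2 * y / s * log_exp_integrand (y ^ 2 / s))
    (at_point 0) (Rbar_locally p_infty) (L - kappa + ln (1 + c) - c * euler_tail 0).
Proof.
  intros hs.
  replace (L - kappa + ln (1 + c) - c * euler_tail 0)
    with (L - kappa + ln (1 + c) - c * euler_tail 0 - log_exp_primitive (0 ^ 2 / s))
    by (replace (0 ^ 2 / s) with 0 by (field; lra); rewrite log_exp_primitive_0; ring).
  apply (is_RInt_gen_p_infty_of_derive _ (fun y => log_exp_primitive (y ^ 2 / s))).
  - intros y. apply (is_derive_comp log_exp_primitive (fun y => y ^ 2 / s)).
    + apply is_derive_log_exp_primitive.
    + auto_derive; [lra | field; lra].
  - intros y. apply (continuous_mult (K := R_AbsRing)).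
    + apply ex_derive_continuous_R. auto_derive. lra.
    + apply (continuous_comp (fun y => y ^ 2 / s) log_exp_integrand).
      * apply ex_derive_continuous_R. auto_derive. lra.
      * apply continuous_log_exp_integrand.
  - apply (is_lim_comp log_exp_primitive (fun y => y ^ 2 / s) p_infty _ p_infty).
    + apply is_lim_log_exp_primitive.
    + apply is_lim_sqr_div, hs.
    + exists 0. intros y _ e. discriminate e.
Qed.

End LogExpIntegral.

Lemma alpha_pos sigma2 x2 x : 0 < sigma2 -> 0 < x2 -> 0 < alpha sigma2 x2 x.
Proof.
  intros hs hx2. unfold alpha. pose proof (pow_lt x2 2 hx2). pose proof (pow2_ge_0 x).
  apply Rmult_lt_0_compat; apply Rdiv_lt_0_compat; lra.
Qed.

Lemma beta_pos sigma2 x2 a1 a2 : 0 < sigma2 -> 0 < a1 -> 0 < a2 -> 0 < beta sigma2 x2 a1 a2.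
Proof.
  intros hs ha1 ha2. unfold beta. pose proof (pow2_ge_0 x2).
  apply Rmult_lt_0_compat; apply Rdiv_lt_0_compat; lra.
Qed.

(* With [u = y^2 / (x^2 + sigma2)], the mixture factors as
   [a2 / t * exp (- y^2 / t) * (1 + exp (- alpha u) / beta)], [t = x2^2 + sigma2]. *)
Lemma J_integrand_eq sigma2 x2 x a1 a2 y :
  0 < sigma2 -> 0 < a1 -> 0 < a2 ->
  J_integrand sigma2 x2 a1 a2 x y
  = 2 * y / (x ^ 2 + sigma2)
    * log_exp_integrand (ln (a2 / (x2 ^ 2 + sigma2))) ((x ^ 2 + sigma2) / (x2 ^ 2 + sigma2))
        (/ beta sigma2 x2 a1 a2) (alpha sigma2 x2 x) (y ^ 2 / (x ^ 2 + sigma2)).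
Proof.
  intros hs ha1 ha2.
  pose proof (pow2_ge_0 x). pose proof (pow2_ge_0 x2).
  set (s := x ^ 2 + sigma2). set (t := x2 ^ 2 + sigma2).
  set (E := exp (- alpha sigma2 x2 x * (y ^ 2 / s))).
  assert (hE : 0 < E) by apply exp_pos.
  assert (hsplit : exp (- y ^ 2 / sigma2) = exp (- y ^ 2 / t) * E).
  { unfold E. rewrite <- exp_plus. f_equal. unfold alpha, s, t. field. lra. }
  assert (hmix : a1 / sigma2 * exp (- y ^ 2 / sigma2) + a2 / t * exp (- y ^ 2 / t)
                 = a2 / t * exp (- y ^ 2 / t) * (1 + / beta sigma2 x2 a1 a2 * E)).
  { rewrite hsplit. unfold beta. fold t. field. unfold t; repeat split; lra. }
  unfold J_integrand, log_exp_integrand. fold s t E. rewrite hmix.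
  rewrite !ln_mult, ln_exp.
  - replace (- (y ^ 2 / s)) with (- y ^ 2 / s) by (field; unfold s; lra). field. unfold s, t; lra.
  - apply Rdiv_lt_0_compat; unfold t; lra.
  - apply exp_pos.
  - apply Rmult_lt_0_compat; [apply Rdiv_lt_0_compat; unfold t; lra | apply exp_pos].
  - pose proof (Rinv_0_lt_compat _ (beta_pos sigma2 x2 a1 a2 hs ha1 ha2)). nra.
Qed.

Theorem mainTheorem4 (sigma2 x2 x a1 a2 : R)
  (hs : 0 < sigma2) (hx2 : 0 < x2) (hx : 0 <= x)
  (ha1 : 0 < a1 < 1) (ha2 : 0 < a2 < 1) (hsum : a1 + a2 = 1) :
  let al := alpha sigma2 x2 x in
  let be := beta sigma2 x2 a1 a2 in
  is_RInt_gen (J_integrand sigma2 x2 a1 a2 x) (at_point 0) (Rbar_locally p_infty)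
    (- ((x ^ 2 + sigma2) / (x2 ^ 2 + sigma2))
     + ln (a2 / (x2 ^ 2 + sigma2))
     + ln (1 + / be)
     - (al * / be) / (al + 1)
       * hyp2F1 1 ((al + 1) / al) ((2 * al + 1) / al) (- / be)).
Proof.
  intros al be.
  pose proof (alpha_pos sigma2 x2 x hs hx2) as hal. fold al in hal.
  pose proof (beta_pos sigma2 x2 a1 a2 hs (proj1 ha1) (proj1 ha2)) as hbe. fold be in hbe.
  pose proof (Rinv_0_lt_compat _ hbe) as hc.
  pose proof (pow2_ge_0 x). pose proof (pow2_ge_0 x2).
  replace ((al + 1) / al) with (1 + / al) by (field; lra).
  replace ((2 * al + 1) / al) with (2 + / al) by (field; lra).
  rewrite (hyp2F1_eq_of_is_hyp2F1_cont _ _ _ _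
             (is_hyp2F1_cont_euler (/ al) (Rinv_0_lt_compat _ hal))) by lra.
  eapply is_RInt_gen_ext.
  { apply filter_forall. intros ab y _. symmetry. apply J_integrand_eq; lra. }
  replace (- _ + _ + _ - _) with
    (ln (a2 / (x2 ^ 2 + sigma2)) - (x ^ 2 + sigma2) / (x2 ^ 2 + sigma2) + ln (1 + / be)
     - / be * euler_tail (/ be) al 0)
    by (unfold hyp2F1_euler, euler_tail; field; lra).
  apply is_RInt_gen_gauss_log_exp; [exact hc | exact hal | lra].
Qed.
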